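(* Let $(A,B)$ with $A\in\mathbb{R}^{n\times n}$, $B\in\mathbb{R}^{n\times r}$ be a controllable pair with controllability index $m$. Then for each real matrix $M\in\mathbb{R}^{n\times n}$, the pair $(M+gA,B)$ is controllable with controllability index no greater than $m$ for all but at most finitely many values of the real scalar $g$. Moreover, if $mr=n$, then $m$ is the controllability index of $(M+gA,B)$ for all but finitely many values of $g$.
   Context: The controllability index of a controllable pair $(A,B)$ is the smallest $k$ with $\mathrm{rank}[B\ AB\ \cdots\ A^{k-1}B]=n$. *)

From HB Require Import structures.
From mathcomp Require Import all_boot all_order all_algebra.
From mathcomp Require Import reals.
Set Implicit Arguments. Unset Strict Implicit. Unset Printing Implicit Defensive.
Import Order.TTheory GRing.Theory Num.Theory.
Local Open Scope ring_scope.

Definition ctrb_mx (R : realType) (n r : nat) (A : 'M[R]_n) (B : 'M[R]_(n, r))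
  (k : nat) : 'M[R]_(n, \sum_(j < k) r) :=
  \mxrow_(j < k) (A ^+ j *m B).

Definition controllable (R : realType) (n r : nat) (A : 'M[R]_n) (B : 'M[R]_(n, r)) : Prop :=
  exists k : nat, \rank (ctrb_mx A B k) = n.

Definition is_ctrb_index (R : realType) (n r : nat) (A : 'M[R]_n) (B : 'M[R]_(n, r))
  (m : nat) : Prop :=
  \rank (ctrb_mx A B m) = n /\ (forall k : nat, (k < m)%N -> \rank (ctrb_mx A B k) <> n).

(** Fix a full minor of [ctrb A B m] (it exists since that matrix has rank
    [n]).  Its determinant along the pencil [A + h M] is a polynomial in [h]
    that does not vanish at [h = 0], hence vanishes only at finitely many [h],
    so [ctrb (A + h M) B m] has rank [n] for all but finitely many [h].  For
    [g <> 0], [M + g A = g (A + g^-1 M)], and scaling the system matrix by a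
    nonzero scalar only rescales the blocks of the controllability matrix, so
    [ctrb (M + g A) B m] has rank [n] for all but finitely many [g]; the
    controllability index of [(M + g A, B)] is then at most [m].  When
    [m r = n], the matrices [ctrb _ B k] with [k < m] have fewer than [n]
    columns, so the index is exactly [m]. *)

From HB Require Import structures.
From mathcomp Require Import all_boot all_order all_algebra.
From mathcomp Require Import reals.
From Stdlib Require Import Classical.
Set Implicit Arguments. Unset Strict Implicit. Unset Printing Implicit Defensive.
Import Order.TTheory GRing.Theory Num.Theory.
Local Open Scope ring_scope.

Lemma poly_cofinite_nonroot (F : idomainType) (p : {poly F}) :
  p != 0 -> exists s : seq F, forall x, x \notin s -> ~~ root p x.
Proof.
elim: {p}(size p) {-2}p (leqnn (size p)) => [|k IHk] p size_p p_neq0.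
  by move: size_p; rewrite leqn0 size_poly_eq0 (negbTE p_neq0).
have [[a root_a]|no_root] := classic (exists a, root p a); last first.
  by exists [::] => x _; apply/negP => root_x; apply: no_root; exists x.
have [q def_p] := factor_theorem p a root_a.
have q_neq0 : q != 0 by apply: contra p_neq0 => /eqP q0; rewrite def_p q0 mul0r.
have size_q : (size q <= k)%N.
  by move: size_p; rewrite def_p size_mul ?polyXsubC_eq0 // size_XsubC addn2.
have [s nroot_s] := IHk q size_q q_neq0.
exists (a :: s) => x; rewrite inE negb_or => /andP[x_neq_a /nroot_s].
by rewrite def_p rootM root_XsubC negb_or x_neq_a => ->.
Qed.

Lemma row_free_horner_cofinite (F : fieldType) m p (P : 'M[{poly F}]_(m, p))
    (x0 : F) :
  row_free (map_mx (horner_eval x0) P) ->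
  exists s : seq F, forall x, x \notin s -> row_free (map_mx (horner_eval x) P).
Proof.
move=> free_P0; have full_P0 : row_full (map_mx (horner_eval x0) P)^T.
  by rewrite /row_full mxrank_tr.
have [f unit_f] : exists f, rowsub f (map_mx (horner_eval x0) P)^T \in unitmx.
  by exists (fullrankfun full_P0); apply: fullrowsub_unit.
pose minor := \det (rowsub f P^T).
have minorE x : minor.[x] = \det (rowsub f (map_mx (horner_eval x) P)^T).
  by rewrite -horner_evalE -det_map_mx map_mxsub map_trmx.
have minor_neq0 : minor != 0.
  apply: contraTneq unit_f => minor0.
  by rewrite unitmxE unitfE -minorE minor0 horner0 eqxx.
have [s nroot_s] := poly_cofinite_nonroot minor_neq0.
exists s => x /nroot_s; rewrite -unitfE minorE -unitmxE => /mxrank_unit rk_minor.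
by rewrite -row_leq_rank -mxrank_tr -{1}rk_minor rowsubE mxrankM_maxr.
Qed.

(* [ctrb_mx] over an arbitrary ring, so that it applies to polynomial matrices. *)
Definition ctrb (K : pzRingType) n r (A : 'M[K]_n) (B : 'M[K]_(n, r)) k :
  'M[K]_(n, \sum_(j < k) r) :=
  \mxrow_(j < k) (A ^+ j *m B).

Lemma ctrb_mxE (R : realType) n r (A : 'M[R]_n) (B : 'M[R]_(n, r)) k :
  ctrb_mx A B k = ctrb A B k.
Proof. by []. Qed.

Section Ctrb.

Variables (n r : nat).

Lemma map_mxX (K K' : pzRingType) (f : {rmorphism K -> K'}) (A : 'M[K]_n) j :
  map_mx f (A ^+ j) = map_mx f A ^+ j.
Proof.
elim: j => [|j IHj]; first by rewrite !expr0 map_mx1.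
by rewrite !exprS -!mulmxE map_mxM IHj.
Qed.

Lemma map_ctrb (K K' : pzRingType) (f : {rmorphism K -> K'})
    (A : 'M[K]_n) (B : 'M[K]_(n, r)) k :
  map_mx f (ctrb A B k) = ctrb (map_mx f A) (map_mx f B) k.
Proof.
have -> : map_mx f (ctrb A B k) = \mxrow_(j < k) map_mx f (A ^+ j *m B).
  by apply/matrixP => i j; rewrite !mxE.
by apply: eq_mxrow => j; rewrite map_mxM map_mxX.
Qed.

Lemma scalemxX (K : comPzRingType) (a : K) (A : 'M[K]_n) j :
  (a *: A) ^+ j = a ^+ j *: A ^+ j.
Proof.
elim: j => [|j IHj]; first by rewrite !expr0 scale1r.
by rewrite !exprS -!mulmxE IHj -scalemxAl -scalemxAr scalerA.
Qed.

Lemma ctrbZ (K : comPzRingType) (a : K) (A : 'M[K]_n) (B : 'M[K]_(n, r)) k :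
  ctrb (a *: A) B k = ctrb A B k *m \mxdiag_(j < k) ((a ^+ j)%:M : 'M_r).
Proof.
rewrite /ctrb mul_mxrow_mxdiag; apply: eq_mxrow => j.
by rewrite mul_mx_scalar scalemxX scalemxAl.
Qed.

Variable F : fieldType.
Implicit Types (A M : 'M[F]_n) (B : 'M[F]_(n, r)).

Lemma mxrank_ctrbZ (a : F) A B k :
  a != 0 -> \rank (ctrb (a *: A) B k) = \rank (ctrb A B k).
Proof.
move=> a_neq0; apply/eqP; rewrite eqn_leq {1}ctrbZ mxrankM_maxl /=.
by rewrite -{1}[A](scalerK a_neq0) ctrbZ mxrankM_maxl.
Qed.

Lemma rank_ctrb_le A B k : (\rank (ctrb A B k) <= k * r)%N.
Proof. by apply: leq_trans (rank_leq_col _) _; rewrite sum_nat_const card_ord. Qed.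

Lemma row_free_ctrb_pencil A M B k :
  row_free (ctrb A B k) ->
  exists s : seq F, forall h, h \notin s -> row_free (ctrb (A + h *: M) B k).
Proof.
pose pencil := map_mx polyC A + 'X *: map_mx polyC M.
have pencilE h : ctrb (A + h *: M) B k
                 = map_mx (horner_eval h) (ctrb pencil (map_mx polyC B) k).
  have evalC (C : 'M[F]_(n, _)) : map_mx (horner_eval h) (map_mx polyC C) = C.
    by apply/matrixP => i j; rewrite !mxE horner_evalE hornerC.
  by rewrite map_ctrb map_mxD map_mxZ !evalC /= horner_evalE hornerX.
move=> free_A; have /row_free_horner_cofinite[s free_s] :
    row_free (map_mx (horner_eval 0) (ctrb pencil (map_mx polyC B) k)).
  by rewrite -pencilE scale0r addr0.
by exists s => h /free_s; rewrite pencilE.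
Qed.

Lemma row_free_ctrb_rev_pencil A M B k :
  row_free (ctrb A B k) ->
  exists s : seq F, forall g, g \notin s -> row_free (ctrb (M + g *: A) B k).
Proof.
move=> /(row_free_ctrb_pencil M)[s free_s].
exists (0 :: map GRing.inv s) => g; rewrite inE negb_or => /andP[g_neq0 g_s].
have /free_s : g^-1 \notin s.
  by apply: contra g_s => gVs; rewrite -[g]invrK map_f.
have -> : M + g *: A = g *: (A + g^-1 *: M).
  by rewrite scalerDr scalerA mulfV // scale1r addrC.
by rewrite /row_free mxrank_ctrbZ.
Qed.

End Ctrb.

Section CtrbIndex.

Variables (R : realType) (n r : nat).
Implicit Types (A : 'M[R]_n) (B : 'M[R]_(n, r)).

Lemma ctrb_index_le A B m :
  \rank (ctrb_mx A B m) = n -> exists2 k, (k <= m)%N & is_ctrb_index A B k.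
Proof.
move=> rk_m; have ex_k : exists k, \rank (ctrb_mx A B k) == n.
  by exists m; apply/eqP.
case: (ex_minnP ex_k) => k /eqP rk_k min_k; exists k; first by apply/min_k/eqP.
by split=> // l lt_lk /eqP/min_k; rewrite leqNgt lt_lk.
Qed.

Lemma is_ctrb_index_square A A' B m :
  is_ctrb_index A B m -> (m * r)%N = n -> \rank (ctrb_mx A' B m) = n ->
  is_ctrb_index A' B m.
Proof.
move=> [_ min_m] mr_n rk_m'; split=> // k lt_km rk_k'.
have r_gt0 : (0 < r)%N.
  rewrite lt0n; apply/eqP => r0; apply: (min_m k lt_km).
  have := rank_ctrb_le A B k; rewrite [X in (k * X)%N]r0 muln0 leqn0.
  by rewrite ctrb_mxE => /eqP ->; rewrite -mr_n r0 muln0.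
have := rank_ctrb_le A' B k; rewrite -ctrb_mxE rk_k' -{1}mr_n leq_pmul2r //.
by rewrite leqNgt lt_km.
Qed.

End CtrbIndex.

Theorem lemma4 (R : realType) (n r : nat) (A : 'M[R]_n) (B : 'M[R]_(n, r)) (m : nat) :
  controllable A B -> is_ctrb_index A B m ->
  (forall M : 'M[R]_n,
     exists s : seq R, forall g : R, g \notin s ->
       controllable (M + g *: A) B /\
       exists k : nat, (k <= m)%N /\ is_ctrb_index (M + g *: A) B k) /\
  ((m * r)%N = n ->
   forall M : 'M[R]_n,
     exists s : seq R, forall g : R, g \notin s -> is_ctrb_index (M + g *: A) B m).
Proof.
(* Controllability of [(A, B)] is already implied by [is_ctrb_index A B m]. *)
move=> _ index_m.
have free_m : row_free (ctrb A B m) by apply/eqP; case: index_m.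
have cofinite_full M : exists s : seq R, forall g, g \notin s ->
    \rank (ctrb_mx (M + g *: A) B m) = n.
  have [s free_s] := row_free_ctrb_rev_pencil M free_m.
  by exists s => g /free_s /eqP.
split=> [M | mr_n M]; have [s full_s] := cofinite_full M.
- exists s => g /full_s rk_g; split; first by exists m.
  by have [k le_km index_k] := ctrb_index_le rk_g; exists k.
- by exists s => g /full_s; apply: is_ctrb_index_square index_m mr_n.
Qed.
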